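(* Under the hypotheses of Claim 4.2 (a simple graph $G'$ on $m$ vertices whose minimum degree $\delta$ satisfies $m\cdot\frac{(2\ell-1)^2-1}{(2\ell-1)^2}+\frac{4\ell-3+q}{(2\ell-1)^2}\leq\delta$ for integers $\ell\geq2$, $q\geq1$, and a cyclic enumeration $v_0,\dots,v_{m-1}$ of its vertices), let $r\in\{1,\dots,2\ell-2\}$. Then for every set $C_1=\{v_i,\dots,v_{i+r-1}\}$ of $r$ cyclically consecutive vertices there is another set $C_2=\{v_j,\dots,v_{j+r-1}\}$ of $r$ cyclically consecutive vertices, disjoint from $C_1$, such that every vertex of $C_1$ is adjacent in $G'$ to every vertex of $C_2$.
   Context: Indices are taken modulo $m$. *)

From mathcomp Require Import all_boot all_order all_algebra.
Set Implicit Arguments. Unset Strict Implicit. Unset Printing Implicit Defensive.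

(* A simple graph on m vertices: vertex set 'I_m, the index being the
   position in the cyclic enumeration v_0,...,v_{m-1}; adjacency e is
   symmetric and irreflexive. *)
Definition simple_graph (m : nat) (e : rel 'I_m) : Prop :=
  symmetric e /\ irreflexive e.

Definition deg (m : nat) (e : rel 'I_m) (v : 'I_m) : nat := #|[set u | e v u]|.

(* minimum degree (for m = 0 the default value m is irrelevant) *)
Definition mindeg (m : nat) (e : rel 'I_m) : nat :=
  \big[minn/m]_(v : 'I_m) deg e v.

Definition cyc_seg (m : nat) (i : 'I_m) (r : nat) : {set 'I_m} :=
  [set x : 'I_m | [exists k : 'I_r, val x == (i + k) %% m]].

From mathcomp Require Import all_boot all_order all_algebra.
From mathcomp Require Import zify.
Import Order.TTheory GRing.Theory Num.Theory.
Local Open Scope ring_scope.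

(* Every vertex has at most [m - δ] non-neighbours, itself included.  A start
   [j] is bad for [C1 = cyc_seg i r] when some [x ∈ C1] is non-adjacent to
   some [y] of the segment starting at [j]; each of the at most
   [r (m - δ)] such pairs [(x, y)] is covered by at most [r] starts, since [y]
   lies in at most [r] segments of length [r].  The degree hypothesis gives
   [(m - δ)(2ℓ - 1)^2 < m], and [r ≤ 2ℓ - 2] turns this into
   [r^2 (m - δ) < m], so some start [j] is good.  Irreflexivity makes [C1] and
   the good segment disjoint. *)

Lemma card_bigcup_le {I T : finType} (A : {set I}) (F : I -> {set T}) :
  (#|\bigcup_(x in A) F x| <= \sum_(x in A) #|F x|)%N.
Proof.
apply: (big_ind2 (fun (S : {set T}) n => #|S| <= n)%N) => [|S1 n1 S2 n2 le1 le2|//].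
  by rewrite cards0.
exact: leq_trans (leq_card_setU S1 S2) (leq_add le1 le2).
Qed.

Section CyclicSegment.
Context {n : nat}.
Implicit Types (i j y : 'I_n.+1) (r : nat).

Lemma cyc_segE i r : cyc_seg i r = [set i + inZp k | k : 'I_r].
Proof.
apply/setP => x; rewrite inE.
apply/existsP/imsetP => [[k /eqP xE] | [k _ ->]]; exists k => //.
  by apply: val_inj; rewrite xE /= modnDmr.
by rewrite /= modnDmr.
Qed.

Lemma card_cyc_seg i r : (#|cyc_seg i r| <= r)%N.
Proof. by rewrite cyc_segE (leq_trans (leq_imset_card _ _)) ?card_ord. Qed.

Lemma card_cyc_seg_starts y r : (#|[set j | y \in cyc_seg j r]| <= r)%N.
Proof.
apply: (@leq_trans #|[set y - inZp k | k : 'I_r]|).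
  apply/subset_leq_card/subsetP => j; rewrite inE cyc_segE => /imsetP[k _ ->].
  by apply/imsetP; exists k; rewrite ?addrK.
by rewrite (leq_trans (leq_imset_card _ _)) ?card_ord.
Qed.

End CyclicSegment.

Section MinDegree.
Context {m : nat} (e : rel 'I_m).

Lemma mindeg_le_deg v : (mindeg e <= deg e v)%N.
Proof. by have := bigmin_le m v (deg e); rewrite minEnat. Qed.

Lemma card_nonadj_le x : (#|[set y | ~~ e x y]| <= m - mindeg e)%N.
Proof.
have := cardsC [set y | e x y]; rewrite card_ord.
have -> : ~: [set y | e x y] = [set y | ~~ e x y] by apply/setP => y; rewrite !inE.
have := mindeg_le_deg x; rewrite /deg; lia.
Qed.

End MinDegree.

Lemma card_bad_starts {n} (e : rel 'I_n.+1) (A : {set 'I_n.+1}) r :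
  (#|\bigcup_(x in A) \bigcup_(y in [set y | ~~ e x y]) [set j | y \in cyc_seg j r]|
    <= #|A| * ((n.+1 - mindeg e) * r))%N.
Proof.
apply: (leq_trans (card_bigcup_le _ _)); rewrite -sum_nat_const.
apply: leq_sum => x _; apply: (leq_trans (card_bigcup_le _ _)).
apply: (@leq_trans (\sum_(y in [set y | ~~ e x y]) r)).
  by apply: leq_sum => y _; apply: card_cyc_seg_starts.
by rewrite sum_nat_const leq_mul2r card_nonadj_le orbT.
Qed.

Lemma deficiency_lt {m d l q : nat} : (2 <= l)%N -> (0 < m)%N ->
  (m%:R : rat) * (((2 * l - 1) ^ 2 - 1)%N%:R / ((2 * l - 1) ^ 2)%N%:R)
    + (4 * l - 3 + q)%N%:R / ((2 * l - 1) ^ 2)%N%:R <= d%:R ->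
  ((m - d) * (2 * l - 1) ^ 2 < m)%N.
Proof.
move=> l_ge2 m_gt0; set S := ((2 * l - 1) ^ 2)%N.
have S_gt0 : (0 < S)%N by rewrite expn_gt0; lia.
rewrite mulrA -mulrDl ler_pdivrMr ?ltr0n // -!natrM -natrD ler_nat.
clearbody S; nia.
Qed.

Theorem claim4p3 (m : nat) (e : rel 'I_m) (l q r : nat) :
  simple_graph e ->
  (2 <= l)%N -> (1 <= q)%N ->
  (m%:R : rat) * (((2 * l - 1) ^ 2 - 1)%N%:R / ((2 * l - 1) ^ 2)%N%:R)
    + (4 * l - 3 + q)%N%:R / ((2 * l - 1) ^ 2)%N%:R <= (mindeg e)%:R ->
  (1 <= r <= 2 * l - 2)%N ->
  forall i : 'I_m, exists j : 'I_m,
    [disjoint cyc_seg i r & cyc_seg j r] /\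
    (forall x y, x \in cyc_seg i r -> y \in cyc_seg j r -> e x y).
Proof.
move=> [_ e_irr] l_ge2 _ deg_bound /andP[_ r_le] i.
case: m e e_irr deg_bound i => [|n] e e_irr deg_bound i; first by case: i.
have def_lt := deficiency_lt l_ge2 (ltn0Sn n) deg_bound.
pose bad := \bigcup_(x in cyc_seg i r) \bigcup_(y in [set y | ~~ e x y])
              [set j | y \in cyc_seg j r].
have card_bad : (#|bad| < n.+1)%N.
  apply: leq_trans (card_bad_starts _ _ _) _; apply: leq_ltn_trans def_lt.
  apply: (leq_trans (leq_mul (card_cyc_seg i r) (leqnn _))).
  by rewrite mulnCA leq_mul2l expnS expn1 leq_mul ?orbT //; lia.
have [j] : exists j, j \in ~: bad.
  by apply/card_gt0P; have := cardsC bad; rewrite card_ord; lia.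
rewrite inE => j_good.
have adj x y : x \in cyc_seg i r -> y \in cyc_seg j r -> e x y.
  move=> x_in y_in; apply: contraNT j_good => not_adj.
  by apply/bigcupP; exists x => //; apply/bigcupP; exists y; rewrite inE.
exists j; split => //.
by apply/pred0P => z /=; apply/negbTE/negP => /andP[/adj zz /zz]; rewrite e_irr.
Qed.
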